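(* In the setting of the interior permanent magnet synchronous machine model (state $x=(i_{s\alpha},i_{s\beta},\omega,\theta)^T$, $\frac{d}{dt}\big(L(\theta)i_{s\alpha\beta}+\psi_r(\cos\theta,\sin\theta)^T\big)=v-R_si_{s\alpha\beta}$, $\dot\omega=0$, $\dot\theta=\omega$, which includes the surface PMSM $L_\Delta=0$ and the synchronous reluctance machine $\psi_r=0$), define the observability vector $\Psi_{\mathcal{O}}=(\Psi_{\mathcal{O}d},\Psi_{\mathcal{O}q})$ in rotor coordinates by $$\Psi_{\mathcal{O}d}=L_\Delta i_{sd}+\psi_r,\qquad \Psi_{\mathcal{O}q}=L_\Delta i_{sq},$$ and, when $\Psi_{\mathcal{O}}\neq0$, let $\theta_{\mathcal{O}}$ be its polar angle, so $\frac{d\theta_{\mathcal{O}}}{dt}=\frac{\Psi_{\mathcal{O}d}\dot\Psi_{\mathcal{O}q}-\Psi_{\mathcal{O}q}\dot\Psi_{\mathcal{O}d}}{\Psi_{\mathcal{O}d}^2+\Psi_{\mathcal{O}q}^2}$ (derivatives along the model). Then the $4\times4$ observability matrix $\mathcal{O}(x)$ (rows: gradients in $x$ of $i_{s\alpha},i_{s\beta},\mathcal{L}_fi_{s\alpha},\mathcal{L}_fi_{s\beta}$) satisfies $$\det\mathcal{O}(x)=\frac{\Psi_{\mathcal{O}d}^2+\Psi_{\mathcal{O}q}^2}{L_dL_q}\Big(\omega-\frac{d\theta_{\mathcal{O}}}{dt}\Big)\quad\text{when }\Psi_{\mathcal{O}}\ne0,\qquad \det\mathcal{O}(x)=0\quad\text{when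 }\Psi_{\mathcal{O}}=0.$$ Consequently, the observability rank condition holds at $x$ (and hence the machine is locally weakly observable there) if and only if $\Psi_{\mathcal{O}}\neq0$ and $\frac{d\theta_{\mathcal{O}}}{dt}\neq\omega$.
   Context: $L(\theta)=\begin{bmatrix}L_0+L_2\cos2\theta & L_2\sin2\theta\\ L_2\sin2\theta & L_0-L_2\cos2\theta\end{bmatrix}$, $L_d=L_0+L_2>0$, $L_q=L_0-L_2>0$, $L_\Delta=L_d-L_q$; $i_{sd},i_{sq}$ are given by $\begin{bmatrix}i_{s\alpha}\\ i_{s\beta}\end{bmatrix}=\begin{bmatrix}\cos\theta&-\sin\theta\\ \sin\theta&\cos\theta\end{bmatrix}\begin{bmatrix}i_{sd}\\ i_{sq}\end{bmatrix}$. The Lie derivative $\mathcal{L}_fh=\frac{\partial h}{\partial x}f(x,u)$. The observability rank condition at $x_0$ (nonsingularity of the observability matrix at $x_0$) implies local weak observability at $x_0$. *)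

From Stdlib Require Import Reals.
Open Scope R_scope.

(* State x = (i_salpha, i_sbeta, omega, theta), coordinates 0,1,2,3. *)
Definition R4 : Type := (R * R * R * R)%type.

Definition st0 (x : R4) : R := let '(a, _, _, _) := x in a.
Definition st1 (x : R4) : R := let '(_, b, _, _) := x in b.
Definition st2 (x : R4) : R := let '(_, _, c, _) := x in c.
Definition st3 (x : R4) : R := let '(_, _, _, d) := x in d.

Definition coord (x : R4) (j : nat) : R :=
  match j with 0 => st0 x | 1 => st1 x | 2 => st2 x | _ => st3 x end.

Definition upd (x : R4) (j : nat) (t : R) : R4 :=
  let '(a, b, c, d) := x in
  match j with
  | 0 => (t, b, c, d)
  | 1 => (a, t, c, d)
  | 2 => (a, b, t, d)
  | _ => (a, b, c, t)
  end.

Definition dot4 (g v : R4) : R :=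
  st0 g * st0 v + st1 g * st1 v + st2 g * st2 v + st3 g * st3 v.

Definition is_gradient (F : R4 -> R) (x : R4) (g : R4) : Prop :=
  forall j : nat, (j < 4)%nat ->
    derivable_pt_lim (fun t => F (upd x j t)) (coord x j) (coord g j).

Definition det3 (a11 a12 a13 a21 a22 a23 a31 a32 a33 : R) : R :=
  a11 * (a22 * a33 - a23 * a32)
  - a12 * (a21 * a33 - a23 * a31)
  + a13 * (a21 * a32 - a22 * a31).

Definition det4 (r1 r2 r3 r4 : R4) : R :=
  st0 r1 * det3 (st1 r2) (st2 r2) (st3 r2) (st1 r3) (st2 r3) (st3 r3) (st1 r4) (st2 r4) (st3 r4)
  - st1 r1 * det3 (st0 r2) (st2 r2) (st3 r2) (st0 r3) (st2 r3) (st3 r3) (st0 r4) (st2 r4) (st3 r4)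
  + st2 r1 * det3 (st0 r2) (st1 r2) (st3 r2) (st0 r3) (st1 r3) (st3 r3) (st0 r4) (st1 r4) (st3 r4)
  - st3 r1 * det3 (st0 r2) (st1 r2) (st2 r2) (st0 r3) (st1 r3) (st2 r3) (st0 r4) (st1 r4) (st2 r4).

Definition obs_rank_condition (r1 r2 r3 r4 : R4) : Prop := det4 r1 r2 r3 r4 <> 0.

(* Machine data: L(theta) = [[L0 + L2 cos 2th, L2 sin 2th],[L2 sin 2th, L0 - L2 cos 2th]] *)
Definition Ld (L0 L2 : R) : R := L0 + L2.
Definition Lq (L0 L2 : R) : R := L0 - L2.
Definition LDelta (L0 L2 : R) : R := Ld L0 L2 - Lq L0 L2.

(* total flux  L(theta) i_salphabeta + psi_r (cos theta, sin theta) *)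
Definition flux_a (L0 L2 psi_r : R) (y : R4) : R :=
  (L0 + L2 * cos (2 * st3 y)) * st0 y + L2 * sin (2 * st3 y) * st1 y + psi_r * cos (st3 y).
Definition flux_b (L0 L2 psi_r : R) (y : R4) : R :=
  L2 * sin (2 * st3 y) * st0 y + (L0 - L2 * cos (2 * st3 y)) * st1 y + psi_r * sin (st3 y).

(* f is the vector field x |-> f(x,u) of the model for the (current) input u = (va, vb):
   d/dt flux = v - Rs i,  d omega/dt = 0,  d theta/dt = omega,
   where d/dt of a state function is its derivative along f (gradient . f). *)
Definition is_ipmsm_field (L0 L2 psi_r Rs va vb : R) (f : R4 -> R4) : Prop :=
  forall y : R4,
    st2 (f y) = 0 /\ st3 (f y) = st2 y /\
    (forall g, is_gradient (flux_a L0 L2 psi_r) y g -> dot4 g (f y) = va - Rs * st0 y) /\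
    (forall g, is_gradient (flux_b L0 L2 psi_r) y g -> dot4 g (f y) = vb - Rs * st1 y).

Definition i_sd (y : R4) : R := cos (st3 y) * st0 y + sin (st3 y) * st1 y.
Definition i_sq (y : R4) : R := - sin (st3 y) * st0 y + cos (st3 y) * st1 y.

Definition PsiOd (L0 L2 psi_r : R) (y : R4) : R := LDelta L0 L2 * i_sd y + psi_r.
Definition PsiOq (L0 L2 : R) (y : R4) : R := LDelta L0 L2 * i_sq y.

From Stdlib Require Import Reals Lra Lia.
From Coquelicot Require Import Coquelicot.
Open Scope R_scope.

(* Along the model, L(θ) i' + ω ∂_θφ = v − R_s i, where φ is the total flux. Differentiating
   this balance in ω and in θ (instead of solving it for i') shows that the two columns of the
   observability matrix that matter solve L(θ)·X = −∂_θφ and L(θ)·Y = −(∂_θL·i' + ω ∂²_θφ),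
   so det O · L_d L_q = det[∂_θφ, ∂_θL·i' + ω ∂²_θφ]. In rotor coordinates these two vectors
   are R(θ)(Ψ_Oq, Ψ_Od) and R(θ)(Ψ̇_Oq − ωΨ_Od, Ψ̇_Od + ωΨ_Oq), whence
   det O · L_d L_q = ω |Ψ_O|² − (Ψ_Od Ψ̇_Oq − Ψ_Oq Ψ̇_Od) = |Ψ_O|² (ω − θ̇_O). *)

Lemma det2_mul (l11 l12 l21 l22 x1 x2 y1 y2 : R) :
  (l11 * l22 - l12 * l21) * (x1 * y2 - y1 * x2)
  = (l11 * x1 + l12 * x2) * (l21 * y1 + l22 * y2) - (l11 * y1 + l12 * y2) * (l21 * x1 + l22 * x2).
Proof. ring. Qed.

Lemma det4_unit_rows (r3 r4 : R4) :
  det4 (1, 0, 0, 0) (0, 1, 0, 0) r3 r4 = st2 r3 * st3 r4 - st3 r3 * st2 r4.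
Proof. unfold det4, det3; cbn [st0 st1 st2 st3]; ring. Qed.

Lemma sum_sq_neq0 (p q : R) : (p, q) <> (0, 0) <-> p ^ 2 + q ^ 2 <> 0.
Proof.
  split; intros H HN; apply H.
  - assert (p = 0) by nra. assert (q = 0) by nra. now subst.
  - injection HN as -> ->. ring.
Qed.

Lemma det_polar_form (D k Pd Pq dPd dPq w : R) :
  0 < k -> D * k = w * (Pd ^ 2 + Pq ^ 2) - (Pd * dPq - Pq * dPd) ->
  let N := Pd ^ 2 + Pq ^ 2 in
  ((Pd, Pq) <> (0, 0) -> D = N / k * (w - (Pd * dPq - Pq * dPd) / N)) /\
  ((Pd, Pq) = (0, 0) -> D = 0) /\
  (D <> 0 <-> (Pd, Pq) <> (0, 0) /\ (Pd * dPq - Pq * dPd) / N <> w).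
Proof.
  intros Hk HD N.
  assert (Hpolar : (Pd, Pq) <> (0, 0) -> D = N / k * (w - (Pd * dPq - Pq * dPd) / N)).
  { intros Hne. apply sum_sq_neq0 in Hne.
    apply (Rmult_eq_reg_r k); [|lra]. rewrite HD. unfold N in *. field. lra. }
  assert (Hzero : (Pd, Pq) = (0, 0) -> D = 0).
  { intros Heq. injection Heq as -> ->. apply (Rmult_eq_reg_r k); [|lra]. rewrite HD. ring. }
  split; [exact Hpolar | split; [exact Hzero |]].
  destruct (Req_dec N 0) as [HN | HN].
  - unfold N in HN. assert (Pd = 0) by nra. assert (Pq = 0) by nra. subst Pd Pq.
    rewrite (Hzero eq_refl). tauto.
  - assert (Hne : (Pd, Pq) <> (0, 0)) by (apply sum_sq_neq0; exact HN).
    rewrite (Hpolar Hne). split.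
    + intros HD0. split; [exact Hne|]. intros Hw. apply HD0. rewrite Hw. ring.
    + intros [_ Hw] HD0. apply Rmult_integral in HD0 as [H0 | H0].
      * unfold Rdiv in H0. apply Rmult_integral in H0 as [H0 | H0]; [lra|].
        apply Rinv_neq_0_compat in H0; lra.
      * apply Hw; lra.
Qed.

Lemma derivative_of_constant_combination (A B K F G : R -> R) (c t dA dB dK dF dG : R) :
  derivable_pt_lim A t dA -> derivable_pt_lim F t dF ->
  derivable_pt_lim B t dB -> derivable_pt_lim G t dG ->
  derivable_pt_lim K t dK ->
  (forall s, A s * F s + B s * G s + K s = c) ->
  dA * F t + A t * dF + (dB * G t + B t * dG) + dK = 0.
Proof.
  intros HA HF HB HG HK Hc.
  assert (Hcomb := derivable_pt_lim_plus _ _ _ _ _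
    (derivable_pt_lim_plus _ _ _ _ _ (derivable_pt_lim_mult _ _ _ _ _ HA HF)
       (derivable_pt_lim_mult _ _ _ _ _ HB HG)) HK).
  apply is_derive_Reals in Hcomb.
  apply (is_derive_ext _ (fun _ => c)) in Hcomb; [|exact Hc].
  apply is_derive_Reals in Hcomb.
  exact (uniqueness_limite _ _ _ _ Hcomb (derivable_pt_lim_const c t)).
Qed.

Lemma is_gradient_unique (F : R4 -> R) (x g g' : R4) :
  is_gradient F x g -> is_gradient F x g' -> g = g'.
Proof.
  intros Hg Hg'.
  assert (E : forall j, (j < 4)%nat -> coord g j = coord g' j)
    by (intros j Hj; exact (uniqueness_limite _ _ _ _ (Hg j Hj) (Hg' j Hj))).
  destruct g as [[[g0 g1] g2] g3], g' as [[[g0' g1'] g2'] g3'].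
  pose proof (E 0%nat ltac:(lia)) as E0; pose proof (E 1%nat ltac:(lia)) as E1;
  pose proof (E 2%nat ltac:(lia)) as E2; pose proof (E 3%nat ltac:(lia)) as E3.
  simpl in E0, E1, E2, E3. now subst.
Qed.

Definition flux_a_theta (L2 psi_r : R) (y : R4) : R :=
  -2 * L2 * sin (2 * st3 y) * st0 y + 2 * L2 * cos (2 * st3 y) * st1 y - psi_r * sin (st3 y).
Definition flux_b_theta (L2 psi_r : R) (y : R4) : R :=
  2 * L2 * cos (2 * st3 y) * st0 y + 2 * L2 * sin (2 * st3 y) * st1 y + psi_r * cos (st3 y).

Ltac solve_gradient :=
  let j := fresh "j" in let Hj := fresh "Hj" in
  intros j Hj; destruct j as [|[|[|[|j]]]]; [| | | | lia];
  simpl; apply is_derive_Reals; auto_derive; auto; ring.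

Lemma is_gradient_st0 (x : R4) : is_gradient st0 x (1, 0, 0, 0).
Proof. destruct x as [[[a b] w] th]; solve_gradient. Qed.

Lemma is_gradient_st1 (x : R4) : is_gradient st1 x (0, 1, 0, 0).
Proof. destruct x as [[[a b] w] th]; solve_gradient. Qed.

Lemma is_gradient_flux_a (L0 L2 psi_r : R) (y : R4) :
  is_gradient (flux_a L0 L2 psi_r) y
    (L0 + L2 * cos (2 * st3 y), L2 * sin (2 * st3 y), 0, flux_a_theta L2 psi_r y).
Proof. destruct y as [[[a b] w] th]; unfold flux_a, flux_a_theta; solve_gradient. Qed.

Lemma is_gradient_flux_b (L0 L2 psi_r : R) (y : R4) :
  is_gradient (flux_b L0 L2 psi_r) y
    (L2 * sin (2 * st3 y), L0 - L2 * cos (2 * st3 y), 0, flux_b_theta L2 psi_r y).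
Proof. destruct y as [[[a b] w] th]; unfold flux_b, flux_b_theta; solve_gradient. Qed.

Lemma is_gradient_PsiOd (L0 L2 psi_r : R) (y : R4) :
  is_gradient (PsiOd L0 L2 psi_r) y
    (LDelta L0 L2 * cos (st3 y), LDelta L0 L2 * sin (st3 y), 0, PsiOq L0 L2 y).
Proof. destruct y as [[[a b] w] th]; unfold PsiOd, PsiOq, i_sd, i_sq; solve_gradient. Qed.

Lemma is_gradient_PsiOq (L0 L2 : R) (y : R4) :
  is_gradient (PsiOq L0 L2) y
    (- LDelta L0 L2 * sin (st3 y), LDelta L0 L2 * cos (st3 y), 0, - (LDelta L0 L2 * i_sd y)).
Proof. destruct y as [[[a b] w] th]; unfold PsiOq, i_sd, i_sq; solve_gradient. Qed.

Section Field.

Variables (L0 L2 psi_r Rs va vb : R) (f : R4 -> R4).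
Hypothesis hf : is_ipmsm_field L0 L2 psi_r Rs va vb f.

Lemma flux_balance_a (y : R4) :
  (L0 + L2 * cos (2 * st3 y)) * st0 (f y) + L2 * sin (2 * st3 y) * st1 (f y)
  + st2 y * flux_a_theta L2 psi_r y = va - Rs * st0 y.
Proof.
  destruct (hf y) as [Hw [Hth [Ha _]]].
  rewrite <- (Ha _ (is_gradient_flux_a L0 L2 psi_r y)); unfold dot4; cbn [st0 st1 st2 st3].
  rewrite Hw, Hth; ring.
Qed.

Lemma flux_balance_b (y : R4) :
  L2 * sin (2 * st3 y) * st0 (f y) + (L0 - L2 * cos (2 * st3 y)) * st1 (f y)
  + st2 y * flux_b_theta L2 psi_r y = vb - Rs * st1 y.
Proof.
  destruct (hf y) as [Hw [Hth [_ Hb]]].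
  rewrite <- (Hb _ (is_gradient_flux_b L0 L2 psi_r y)); unfold dot4; cbn [st0 st1 st2 st3].
  rewrite Hw, Hth; ring.
Qed.

Lemma field_omega_derivative (a b w th : R) (r3 r4 : R4) :
  is_gradient (fun y => st0 (f y)) (a, b, w, th) r3 ->
  is_gradient (fun y => st1 (f y)) (a, b, w, th) r4 ->
  (L0 + L2 * cos (2 * th)) * st2 r3 + L2 * sin (2 * th) * st2 r4
    = - flux_a_theta L2 psi_r (a, b, w, th) /\
  L2 * sin (2 * th) * st2 r3 + (L0 - L2 * cos (2 * th)) * st2 r4
    = - flux_b_theta L2 psi_r (a, b, w, th).
Proof.
  intros h3 h4.
  pose proof (h3 2%nat ltac:(lia)) as d3; pose proof (h4 2%nat ltac:(lia)) as d4.
  cbn [upd coord st2] in d3, d4.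
  split.
  - assert (E := derivative_of_constant_combination
      (fun _ => L0 + L2 * cos (2 * th)) (fun _ => L2 * sin (2 * th))
      (fun t => t * flux_a_theta L2 psi_r (a, b, t, th)) _ _ (va - Rs * a) w
      0 0 (flux_a_theta L2 psi_r (a, b, w, th)) _ _
      (derivable_pt_lim_const _ _) d3 (derivable_pt_lim_const _ _) d4
      ltac:(apply is_derive_Reals; unfold flux_a_theta; simpl; auto_derive; auto; ring)
      (fun t => flux_balance_a (a, b, t, th))).
    lra.
  - assert (E := derivative_of_constant_combination
      (fun _ => L2 * sin (2 * th)) (fun _ => L0 - L2 * cos (2 * th))
      (fun t => t * flux_b_theta L2 psi_r (a, b, t, th)) _ _ (vb - Rs * b) w
      0 0 (flux_b_theta L2 psi_r (a, b, w, th)) _ _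
      (derivable_pt_lim_const _ _) d3 (derivable_pt_lim_const _ _) d4
      ltac:(apply is_derive_Reals; unfold flux_b_theta; simpl; auto_derive; auto; ring)
      (fun t => flux_balance_b (a, b, t, th))).
    lra.
Qed.

Lemma field_theta_derivative (a b w th : R) (r3 r4 : R4) :
  is_gradient (fun y => st0 (f y)) (a, b, w, th) r3 ->
  is_gradient (fun y => st1 (f y)) (a, b, w, th) r4 ->
  let C := cos (2 * th) in let S := sin (2 * th) in
  let f0 := st0 (f (a, b, w, th)) in let f1 := st1 (f (a, b, w, th)) in
  (L0 + L2 * C) * st3 r3 + L2 * S * st3 r4
    = - (-2 * L2 * S * f0 + 2 * L2 * C * f1
         + w * (-4 * L2 * C * a - 4 * L2 * S * b - psi_r * cos th)) /\
  L2 * S * st3 r3 + (L0 - L2 * C) * st3 r4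
    = - (2 * L2 * C * f0 + 2 * L2 * S * f1
         + w * (-4 * L2 * S * a + 4 * L2 * C * b - psi_r * sin th)).
Proof.
  intros h3 h4 C S f0 f1.
  pose proof (h3 3%nat ltac:(lia)) as d3; pose proof (h4 3%nat ltac:(lia)) as d4.
  cbn [upd coord st3] in d3, d4.
  split.
  - assert (E := derivative_of_constant_combination
      (fun t => L0 + L2 * cos (2 * t)) (fun t => L2 * sin (2 * t))
      (fun t => w * flux_a_theta L2 psi_r (a, b, w, t)) _ _ (va - Rs * a) th
      (-2 * L2 * S) (2 * L2 * C) (w * (-4 * L2 * C * a - 4 * L2 * S * b - psi_r * cos th)) _ _
      ltac:(apply is_derive_Reals; auto_derive; auto; unfold S; ring) d3
      ltac:(apply is_derive_Reals; auto_derive; auto; unfold C; ring) d4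
      ltac:(apply is_derive_Reals; unfold flux_a_theta; simpl; auto_derive; auto; unfold C, S; ring)
      (fun t => flux_balance_a (a, b, w, t))).
    cbv beta in E; unfold C, S, f0, f1 in *; lra.
  - assert (E := derivative_of_constant_combination
      (fun t => L2 * sin (2 * t)) (fun t => L0 - L2 * cos (2 * t))
      (fun t => w * flux_b_theta L2 psi_r (a, b, w, t)) _ _ (vb - Rs * b) th
      (2 * L2 * C) (2 * L2 * S) (w * (-4 * L2 * S * a + 4 * L2 * C * b - psi_r * sin th)) _ _
      ltac:(apply is_derive_Reals; auto_derive; auto; unfold C; ring) d3
      ltac:(apply is_derive_Reals; auto_derive; auto; unfold S; ring) d4
      ltac:(apply is_derive_Reals; unfold flux_b_theta; simpl; auto_derive; auto; unfold C, S; ring)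
      (fun t => flux_balance_b (a, b, w, t))).
    cbv beta in E; unfold C, S, f0, f1 in *; lra.
Qed.

Lemma observability_det_identity (x r1 r2 r3 r4 gd gq : R4) :
  is_gradient st0 x r1 -> is_gradient st1 x r2 ->
  is_gradient (fun y => st0 (f y)) x r3 -> is_gradient (fun y => st1 (f y)) x r4 ->
  is_gradient (PsiOd L0 L2 psi_r) x gd -> is_gradient (PsiOq L0 L2) x gq ->
  let Pd := PsiOd L0 L2 psi_r x in let Pq := PsiOq L0 L2 x in
  det4 r1 r2 r3 r4 * (Ld L0 L2 * Lq L0 L2)
  = st2 x * (Pd ^ 2 + Pq ^ 2) - (Pd * dot4 gq (f x) - Pq * dot4 gd (f x)).
Proof.
  intros h1 h2 h3 h4 hgd hgq Pd Pq.
  destruct x as [[[a b] w] th].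
  rewrite (is_gradient_unique _ _ _ _ h1 (is_gradient_st0 _)),
    (is_gradient_unique _ _ _ _ h2 (is_gradient_st1 _)),
    (is_gradient_unique _ _ _ _ hgd (is_gradient_PsiOd _ _ _ _)),
    (is_gradient_unique _ _ _ _ hgq (is_gradient_PsiOq _ _ _)), det4_unit_rows.
  destruct (field_omega_derivative _ _ _ _ _ _ h3 h4) as [Ea Eb].
  destruct (field_theta_derivative _ _ _ _ _ _ h3 h4) as [Ta Tb].
  destruct (hf (a, b, w, th)) as [_ [Fth _]].
  pose proof (det2_mul (L0 + L2 * cos (2 * th)) (L2 * sin (2 * th))
    (L2 * sin (2 * th)) (L0 - L2 * cos (2 * th)) (st2 r3) (st2 r4) (st3 r3) (st3 r4)) as Hprod.
  rewrite Ea, Eb, Ta, Tb in Hprod.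
  assert (HdetL : (L0 + L2 * cos (2 * th)) * (L0 - L2 * cos (2 * th))
                  - L2 * sin (2 * th) * (L2 * sin (2 * th)) = Ld L0 L2 * Lq L0 L2).
  { pose proof (sin2_cos2 (2 * th)) as P; unfold Rsqr in P; unfold Ld, Lq; nra. }
  rewrite HdetL in Hprod. rewrite Rmult_comm, Hprod.
  pose proof (sin2_cos2 th) as P; unfold Rsqr in P.
  unfold Pd, Pq, PsiOd, PsiOq, LDelta, Ld, Lq, i_sd, i_sq, flux_a_theta, flux_b_theta, dot4 in *.
  cbn [st0 st1 st2 st3] in *. rewrite Fth, cos_2a, sin_2a. cbn [st2].
  (* both vectors are rotations by θ, which contribute the factor cos² θ + sin² θ *)
  match goal with |- ?l = ?r =>
    transitivity ((sin th * sin th + cos th * cos th) * r); [ring | rewrite P; ring] end.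
Qed.

End Field.

Theorem proposition1 (L0 L2 psi_r Rs va vb : R) (f : R4 -> R4)
  (hLd : 0 < Ld L0 L2) (hLq : 0 < Lq L0 L2)
  (hf : is_ipmsm_field L0 L2 psi_r Rs va vb f)
  (x r1 r2 r3 r4 gd gq : R4)
  (h1 : is_gradient st0 x r1)
  (h2 : is_gradient st1 x r2)
  (h3 : is_gradient (fun y => st0 (f y)) x r3)
  (h4 : is_gradient (fun y => st1 (f y)) x r4)
  (hgd : is_gradient (PsiOd L0 L2 psi_r) x gd)
  (hgq : is_gradient (PsiOq L0 L2) x gq) :
  let Pd := PsiOd L0 L2 psi_r x in
  let Pq := PsiOq L0 L2 x in
  let dPd := dot4 gd (f x) in
  let dPq := dot4 gq (f x) in
  let dthetaO := (Pd * dPq - Pq * dPd) / (Pd ^ 2 + Pq ^ 2) in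
  let omega := st2 x in
  ((Pd, Pq) <> (0, 0) ->
     det4 r1 r2 r3 r4 = (Pd ^ 2 + Pq ^ 2) / (Ld L0 L2 * Lq L0 L2) * (omega - dthetaO)) /\
  ((Pd, Pq) = (0, 0) -> det4 r1 r2 r3 r4 = 0) /\
  (obs_rank_condition r1 r2 r3 r4 <-> ((Pd, Pq) <> (0, 0) /\ dthetaO <> omega)).
Proof.
  intros Pd Pq dPd dPq dthetaO omega.
  apply det_polar_form.
  - apply Rmult_lt_0_compat; assumption.
  - exact (observability_det_identity _ _ _ _ _ _ _ hf _ _ _ _ _ _ _ h1 h2 h3 h4 hgd hgq).
Qed.
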